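(* For every integer $n>5$ with $n\neq10$ and every integer $k$ with $1\le k\le 9$, $F_{5,k}(n)\neq0$.
   Context: For an integer $j\ge0$, $\binom{x}{j}=x(x-1)\cdots(x-j+1)/j!$ as a polynomial in $x$, and $\binom{x}{j}=0$ for $j<0$. For integers $s\ge1$, $k\ge1$, the Moser polynomial is $F_{s,k}(x)=\sum_{p=1}^{s}(-1)^{p-1}p^{k-1}\binom{x}{s-p}$. *)

From HB Require Import structures.
From mathcomp Require Import all_boot all_order all_algebra.
Set Implicit Arguments. Unset Strict Implicit. Unset Printing Implicit Defensive.
Import Order.TTheory GRing.Theory Num.Theory.
Local Open Scope ring_scope.

Definition binomp (j : nat) : {poly rat} :=
  (j`!%:R)^-1 *: \prod_(i < j) ('X - (i%:R)%:P).

(* Moser polynomial F_{s,k}(x) = sum_{p=1}^s (-1)^(p-1) p^(k-1) binom(x, s-p).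
   Here p ranges over 1..s so s-p >= 0 always. *)
Definition moser (s k : nat) : {poly rat} :=
  \sum_(1 <= p < s.+1) ((-1) ^+ (p - 1)%N * (p%:R) ^+ (k - 1)%N) *: binomp (s - p)%N.

(* Clearing the denominators of the binomials, 24 F_{5,k}(x) is a monic quartic
   with integer coefficients whose leading term dominates once x >= 1000, so it has
   no root there; the integers 6 <= n < 1000 are checked by computation, which
   finds the single root n = 10. *)
From HB Require Import structures.
From mathcomp Require Import all_boot all_order all_algebra.
From mathcomp Require Import ring lra ssrZ.
Set Implicit Arguments. Unset Strict Implicit. Unset Printing Implicit Defensive.
Import Order.TTheory GRing.Theory Num.Theory.
Local Open Scope ring_scope.

Definition moser5_num {R : pzRingType} (m : nat) (x : R) : R :=
  x * (x - 1) * (x - 2) * (x - 3) - 4 * 2 ^+ m * x * (x - 1) * (x - 2)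
  + 12 * 3 ^+ m * x * (x - 1) - 24 * 4 ^+ m * x + 24 * 5 ^+ m.

Lemma moser5_hornerE k (x : rat) : 24 * (moser 5 k).[x] = moser5_num (k - 1) x.
Proof.
rewrite /moser /moser5_num.
do 5 rewrite big_nat_recl //; rewrite big_geq // addr0.
rewrite !hornerD !hornerZ !horner_prod /= !big_ord_recr !big_ord0 /=.
rewrite !hornerXsubC !factS fact0 expr1n !expr0 expr1.
by field.
Qed.

Lemma rmorph_moser5_num (R S : pzRingType) (f : {rmorphism R -> S}) m x :
  f (moser5_num m x) = moser5_num m (f x).
Proof. by rewrite /moser5_num !(rmorphD, rmorphN, rmorphM, rmorphXn, rmorph_nat, rmorph1). Qed.

Lemma moser5_num_gt0 (R : realDomainType) m (x : R) :
  (m <= 8)%N -> 1000 <= x -> 0 < moser5_num m x.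
Proof.
move=> m_le8 x_ge; rewrite /moser5_num.
have [y y_ge0 ->] : exists2 y : R, 0 <= y & x = y + 1000.
  by exists (x - 1000); rewrite ?subr_ge0 ?subrK.
by do 9 (case: m m_le8 => [_|m m_le8]; first by rewrite ?exprS ?expr0; nra).
Qed.

(* Evaluated in [Z] rather than [int] for its binary numerals. *)
Definition moser5_small_roots_check (m : nat) : bool :=
  all (fun j => (j == 10)%N || (moser5_num m (Z_of_int j) != 0)) (iota 6 994).

Lemma moser5_small_roots_checkP : all moser5_small_roots_check (iota 0 9).
Proof. by vm_compute. Qed.

Lemma moser5_num_small_neq0 m (j : nat) :
  (m <= 8)%N -> (5 < j < 1000)%N -> j != 10%N -> moser5_num m (j%:Z) != 0.
Proof.
move=> m_le8 /andP[j_gt5 j_lt] j_neq10.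
have /allP /(_ m) := moser5_small_roots_checkP; rewrite mem_iota => /(_ m_le8).
move=> /allP /(_ j); rewrite mem_iota j_gt5 j_lt (negbTE j_neq10) => /(_ isT).
by rewrite -(rmorph_moser5_num Z_of_int); apply: contra => /eqP ->.
Qed.

Lemma moser5_num_int_neq0 m (n : int) :
  (m <= 8)%N -> 5 < n -> n != 10 -> moser5_num m n != 0.
Proof.
move=> m_le8 n_gt5 n_neq10.
have [n_lt|n_ge] := ltP n 1000; last by rewrite gt_eqF ?moser5_num_gt0.
case: n n_gt5 n_neq10 n_lt => [j|//] j_gt5 j_neq10 j_lt.
by apply: moser5_num_small_neq0; rewrite // -ltz_nat j_gt5.
Qed.

Theorem mainTheorem15 (n : int) (k : nat) :
  (5 < n)%R -> n != 10%:Z -> (1 <= k <= 9)%N ->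
  (moser 5 k).[n%:~R] != 0.
Proof.
move=> n_gt5 n_neq10 /andP[_ k_le9].
have m_le8 : (k - 1 <= 8)%N by rewrite leq_subLR.
have := moser5_num_int_neq0 m_le8 n_gt5 n_neq10.
rewrite -(intr_eq0 rat) rmorph_moser5_num -moser5_hornerE.
by apply: contra => /eqP ->; rewrite mulr0.
Qed.
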